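(* Let $k\geq1$, $\triangle_2=\mathrm{Conv}\{(\pm2,0),(0,\pm1)\}\subset\mathbb{R}^2$, $W_2\cong\mathbb{Z}/2\times\mathbb{Z}/2$ the group generated by $(x,y)\mapsto(-x,y)$ and $(x,y)\mapsto(x,-y)$, $b=|\partial(k\triangle_2)\cap\mathbb{Z}^2|$, and for $0\le i\le k-1$ let $T_i=\mathrm{Conv}\{(0,0),a_i,a_{i+1}\}$ with $a_i=(2i,k-i)$. Let $\delta_k:k\triangle_2\cap\mathbb{Z}^2\to\mathbb{R}$ be a fixed function with $\sum_p\delta_k(p)=1$, and let $g\in\mathrm{PL}(\triangle_2;k)^{W_2}$ satisfy (a) $\sum_{p\in k\triangle_2\cap\mathbb{Z}^2}g(p)-\int_{k\triangle_2}g\,dV\le\frac12\sum_{p\in\partial(k\triangle_2)\cap\mathbb{Z}^2}g(p)+\sum_{p\in k\triangle_2\cap\mathbb{Z}^2}\delta_k(p)g(p)$, with equality only if $g$ is constant; and (b) $\frac{(b+2)|W_2|}{2b\,\mathrm{vol}(T_0)}\sum_{i=0}^{k-1}\int_{T_i}g\geq\frac12\sum_{p\in\partial(k\triangle_2)\cap\mathbb{Z}^2}g(p)+\sum_{p\in k\triangle_2\cap\mathbb{Z}^2}\delta_k(p)g(p)$, with equality only if $g$ is constant. Then $$\frac{1}{\mathrm{vol}(k\triangle_2)}\int_{k\triangle_2}g\,dV\geq\frac{1}{|k\triangle_2\cap\mathbb{Z}^2|}\sum_{p\in k\triangle_2\cap\mathbb{Z}^2}g(p),$$ with equality if and only if $g$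 is constant.
   Context: $\mathrm{PL}(\triangle;k)$: for $\phi:k\triangle\cap\mathbb{Z}^2\to\mathbb{R}$, let $f_\phi(x)=\max\{t:(x,t)\in\mathrm{graph}_\phi\}$ on $k\triangle$, where $\mathrm{graph}_\phi$ is the convex hull of $\bigcup_{x\in k\triangle\cap\mathbb{Z}^2}\{(x,t):t\le\phi(x)\}$; $\mathrm{PL}(\triangle;k)$ is the set of all such $f_\phi$, and $\mathrm{PL}(\triangle;k)^{W}$ the $W$-invariant ones. $\mathrm{vol}$ is Lebesgue area. *)

From Stdlib Require Import Reals Lra List ZArith.
From Stdlib Require Import ClassicalDescription.
Open Scope R_scope.

Definition pt := (R * R)%type.

Fixpoint sumR {A : Type} (f : A -> R) (l : list A) : R :=
  match l with nil => 0 | x :: t => f x + sumR f t end.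

Definition zrange (lo : Z) (len : nat) : list Z :=
  map (fun m => (lo + Z.of_nat m)%Z) (seq 0 len).

(* k * triangle_2, triangle_2 = Conv{(+-2,0),(0,+-1)} = {|x|/2 + |y| <= 1} *)
Definition kTri2 (k : nat) (p : pt) : Prop :=
  Rabs (fst p) / 2 + Rabs (snd p) <= INR k.

Definition lat (k : nat) : list (Z * Z) :=
  filter (fun q => (Z.abs (fst q) + 2 * Z.abs (snd q) <=? 2 * Z.of_nat k)%Z)
    (list_prod (zrange (- 2 * Z.of_nat k) (4 * k + 1))
               (zrange (- Z.of_nat k) (2 * k + 1))).

Definition bdry (k : nat) : list (Z * Z) :=
  filter (fun q => (Z.abs (fst q) + 2 * Z.abs (snd q) =? 2 * Z.of_nat k)%Z) (lat k).

Definition Zpt (q : Z * Z) : pt := (IZR (fst q), IZR (snd q)).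

(* Convex hull of a set S in R^3 = R^2 x R: finite convex combinations *)
Definition in_conv3 (S : pt * R -> Prop) (z : pt * R) : Prop :=
  exists l : list ((pt * R) * R),
    Forall (fun w => S (fst w) /\ 0 <= snd w) l /\
    sumR snd l = 1 /\
    fst (fst z) = sumR (fun w => snd w * fst (fst (fst w))) l /\
    snd (fst z) = sumR (fun w => snd w * snd (fst (fst w))) l /\
    snd z = sumR (fun w => snd w * snd (fst w)) l.

Definition graph_phi (k : nat) (phi : Z * Z -> R) : pt * R -> Prop :=
  in_conv3 (fun z => exists q, In q (lat k) /\ fst z = Zpt q /\ snd z <= phi q).

(* g in PL(triangle_2; k): g = f_phi on k triangle_2 for some phi *)
Definition in_PL (k : nat) (g : pt -> R) : Prop :=
  exists phi : Z * Z -> R, forall x, kTri2 k x ->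
    graph_phi k phi (x, g x) /\ (forall t, graph_phi k phi (x, t) -> t <= g x).

Definition W2_invariant (k : nat) (g : pt -> R) : Prop :=
  forall x y, kTri2 k (x, y) -> g (- x, y) = g (x, y) /\ g (x, - y) = g (x, y).

Definition in_PL_W2 (k : nat) (g : pt -> R) : Prop := in_PL k g /\ W2_invariant k g.

Definition const_on (D : pt -> Prop) (g : pt -> R) : Prop :=
  exists c, forall p, D p -> g p = c.

Definition a_pt (k i : nat) : pt := (2 * INR i, INR k - INR i).
Definition T (k i : nat) (p : pt) : Prop :=
  exists l0 l1 l2, 0 <= l0 /\ 0 <= l1 /\ 0 <= l2 /\ l0 + l1 + l2 = 1 /\
    fst p = l1 * fst (a_pt k i) + l2 * fst (a_pt k (S i)) /\
    snd p = l1 * snd (a_pt k i) + l2 * snd (a_pt k (S i)).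

Definition ind (D : pt -> Prop) (p : pt) : R :=
  if excluded_middle_informative (D p) then 1 else 0.

(* Riemann integral of f over a region D contained in the box [-B,B]^2:
   limit of Riemann sums of f * 1_D over uniform grids of mesh 1/n,
   with arbitrary tags. *)
Definition riemann_int (B : nat) (D : pt -> Prop) (f : pt -> R) (I : R) : Prop :=
  forall eps, 0 < eps -> exists N : nat, forall n : nat, (N <= n)%nat -> (0 < n)%nat ->
    forall tag : Z * Z -> pt,
      (forall c, IZR (fst c) / INR n <= fst (tag c) <= (IZR (fst c) + 1) / INR n /\
                 IZR (snd c) / INR n <= snd (tag c) <= (IZR (snd c) + 1) / INR n) ->
      Rabs (sumR (fun c => ind D (tag c) * f (tag c))
              (list_prod (zrange (- Z.of_nat (B * n)) (2 * B * n))
                         (zrange (- Z.of_nat (B * n)) (2 * B * n)))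
              / (INR n * INR n) - I) < eps.

Definition sum_lat (k : nat) (g : pt -> R) : R := sumR (fun q => g (Zpt q)) (lat k).
Definition sum_bdry (k : nat) (g : pt -> R) : R := sumR (fun q => g (Zpt q)) (bdry k).
Definition sum_delta (k : nat) (delta : Z * Z -> R) (g : pt -> R) : R :=
  sumR (fun q => delta q * g (Zpt q)) (lat k).

From Stdlib Require Import Reals List ZArith Lra Lia Permutation.
From Stdlib Require Import ClassicalDescription IndefiniteDescription.
Open Scope R_scope.

(* The triangles T_0, ..., T_(k-1) tile the part of k triangle_2 in the closed positive
   quadrant, so their images under W_2 tile k triangle_2 and, g being W_2-invariant,
   the integral of g over k triangle_2 is 4 times the sum of its integrals over the T_i.
   With V = vol (k triangle_2) = 4k^2, vol T_0 = k, b = 4k and N = 4k^2 + 2k + 1 lattice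
   points, the left side of (b) is (N - V)/V times that integral, so (a) and (b) give
   sum g - int g <= (N - V)/V int g, which is the inequality; equality there forces
   equality in (a), hence g constant.
   Integrals are limits of Riemann sums with arbitrary tags: areas are obtained by counting
   grid cells with corner tags, and the tiling is applied to Riemann sums whose tags avoid
   the axes and the rays through the a_i, where tiles overlap. *)

(** * Finite sums over lists and integer ranges *)

Lemma sumR_app {A} (f : A -> R) l1 l2 : sumR f (l1 ++ l2) = sumR f l1 + sumR f l2.
Proof. induction l1; simpl; [ring | rewrite IHl1; ring]. Qed.

Lemma sumR_ext {A} (f h : A -> R) l : (forall x, In x l -> f x = h x) -> sumR f l = sumR h l.
Proof. induction l; simpl; intros H; auto. rewrite H, IHl; auto. Qed.

Lemma sumR_plus {A} (f h : A -> R) l : sumR (fun x => f x + h x) l = sumR f l + sumR h l.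
Proof. induction l; simpl; [ring | rewrite IHl; ring]. Qed.

Lemma sumR_minus {A} (f h : A -> R) l : sumR (fun x => f x - h x) l = sumR f l - sumR h l.
Proof. induction l; simpl; [ring | rewrite IHl; ring]. Qed.

Lemma sumR_scal {A} (f : A -> R) c l : sumR (fun x => c * f x) l = c * sumR f l.
Proof. induction l; simpl; [ring | rewrite IHl; ring]. Qed.

Lemma sumR_div {A} (f : A -> R) c l : sumR (fun x => f x / c) l = sumR f l / c.
Proof. induction l; simpl; unfold Rdiv in *; [ring | rewrite IHl; ring]. Qed.

Lemma sumR_const {A} c (l : list A) : sumR (fun _ => c) l = c * INR (length l).
Proof. induction l; simpl length; [simpl; ring | rewrite S_INR; simpl; rewrite IHl; ring]. Qed.

Lemma sumR_zero {A} (f : A -> R) l : (forall x, In x l -> f x = 0) -> sumR f l = 0.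
Proof. intros H. rewrite (sumR_ext f (fun _ => 0)), sumR_const by auto. ring. Qed.

Lemma sumR_le {A} (f h : A -> R) l : (forall x, In x l -> f x <= h x) -> sumR f l <= sumR h l.
Proof.
  induction l as [|a l IH]; simpl; intros H; [lra|].
  specialize (IH (fun x Hx => H x (or_intror Hx))). specialize (H a (or_introl eq_refl)). lra.
Qed.

Lemma sumR_map {A B} (f : B -> R) (m : A -> B) l : sumR f (map m l) = sumR (fun x => f (m x)) l.
Proof. induction l; simpl; auto. rewrite IHl; auto. Qed.

Lemma sumR_perm {A} (f : A -> R) l l' : Permutation l l' -> sumR f l = sumR f l'.
Proof. induction 1; simpl; lra. Qed.

Lemma sumR_involution {A} (h : A -> R) (m : A -> A) l : NoDup l ->
  (forall x, m (m x) = x) -> (forall x, In x l -> In (m x) l) ->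
  sumR (fun x => h (m x)) l = sumR h l.
Proof.
  intros Hl Hinv Hin. rewrite <- sumR_map. apply sumR_perm, Permutation_map_same_l.
  - apply FinFun.Injective_map_NoDup; auto.
    intros x y E. rewrite <- (Hinv x), <- (Hinv y), E. auto.
  - intros y Hy. apply in_map_iff in Hy as [x [<- Hx]]. auto.
Qed.

Lemma sumR_list_prod {A B} (f : A * B -> R) l1 l2 :
  sumR f (list_prod l1 l2) = sumR (fun a => sumR (fun b => f (a, b)) l2) l1.
Proof. induction l1; simpl; auto. rewrite sumR_app, sumR_map, IHl1; auto. Qed.

Lemma sumR_comm {A B} (F : A -> B -> R) l1 l2 :
  sumR (fun a => sumR (fun b => F a b) l2) l1 = sumR (fun b => sumR (fun a => F a b) l1) l2.
Proof.
  induction l1; simpl.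
  - rewrite sumR_zero; auto.
  - rewrite IHl1, <- sumR_plus. auto.
Qed.

Lemma sumR_filter {A} (f : A -> R) (p : A -> bool) l :
  sumR f (filter p l) = sumR (fun x => if p x then f x else 0) l.
Proof. induction l; simpl; auto. destruct (p a); simpl; rewrite IHl; ring. Qed.

Lemma INR_length_filter {A} (p : A -> bool) l :
  INR (length (filter p l)) = sumR (fun x => if p x then 1 else 0) l.
Proof. rewrite <- (Rmult_1_l (INR _)), <- sumR_const, sumR_filter. auto. Qed.

Lemma NoDup_list_prod {A B} (l1 : list A) (l2 : list B) :
  NoDup l1 -> NoDup l2 -> NoDup (list_prod l1 l2).
Proof.
  induction 1 as [|a l1 Ha Hl1 IH]; intros H2; simpl; [constructor|].
  apply NoDup_app; auto.
  - apply FinFun.Injective_map_NoDup; auto. intros u v E; injection E; auto.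
  - intros [a' b] Hm Hm'. apply in_map_iff in Hm as [b' [E _]]. injection E as -> ->.
    apply in_prod_iff in Hm'. tauto.
Qed.

Lemma zrange_cons lo n : zrange lo (S n) = lo :: zrange (lo + 1) n.
Proof.
  unfold zrange. simpl. f_equal; [lia|].
  rewrite <- seq_shift, map_map. apply map_ext. intros; lia.
Qed.

Lemma zrange_app lo a b : zrange lo (a + b) = zrange lo a ++ zrange (lo + Z.of_nat a) b.
Proof.
  revert lo; induction a; intros lo.
  - simpl. rewrite Z.add_0_r; auto.
  - simpl (S a + b)%nat. rewrite !zrange_cons, IHa. simpl. do 3 f_equal. lia.
Qed.

Lemma zrange_snoc lo n : zrange lo (S n) = zrange lo n ++ (lo + Z.of_nat n)%Z :: nil.
Proof. rewrite <- Nat.add_1_r, zrange_app, zrange_cons. reflexivity. Qed.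

Lemma In_zrange lo n z : In z (zrange lo n) <-> (lo <= z < lo + Z.of_nat n)%Z.
Proof.
  unfold zrange. rewrite in_map_iff. split.
  - intros [m [<- Hm]]. apply in_seq in Hm. lia.
  - intros H. exists (Z.to_nat (z - lo)). split; [lia | apply in_seq; lia].
Qed.

Lemma length_zrange lo n : length (zrange lo n) = n.
Proof. unfold zrange. rewrite length_map, length_seq. auto. Qed.

Lemma NoDup_zrange lo n : NoDup (zrange lo n).
Proof. apply FinFun.Injective_map_NoDup; [intros x y H; lia | apply seq_NoDup]. Qed.

Lemma sumR_indicator_zrange (h : Z -> R) a b lo n :
  (forall c, (a <= c <= b)%Z -> h c = 1) -> (forall c, ~ (a <= c <= b)%Z -> h c = 0) ->
  sumR h (zrange lo n) = IZR (Z.max 0 (Z.min b (lo + Z.of_nat n - 1) - Z.max a lo + 1)).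
Proof.
  intros H1 H0. induction n.
  - simpl. f_equal. lia.
  - rewrite zrange_snoc, sumR_app, IHn. simpl. rewrite Rplus_0_r.
    destruct (Z_le_dec a (lo + Z.of_nat n)); destruct (Z_le_dec (lo + Z.of_nat n) b);
      [rewrite H1, <- plus_IZR by lia | rewrite H0, Rplus_0_r by lia ..]; f_equal; lia.
Qed.

Lemma sumR_affine_zrange a b lo n :
  sumR (fun c => a + b * IZR c) (zrange lo n)
  = a * INR n + b * (INR n * IZR lo + INR n * (INR n - 1) / 2).
Proof.
  induction n.
  - simpl. field.
  - rewrite zrange_snoc, sumR_app, IHn, S_INR. unfold sumR at 1.
    rewrite plus_IZR, <- INR_IZR_INZ. field.
Qed.

Lemma sumR_abs_zrange (F : Z -> R) m :
  sumR (fun c => F (Z.abs c)) (zrange (- Z.of_nat m) (2 * m + 1))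
  = F 0%Z + 2 * sumR F (zrange 1 m).
Proof.
  induction m.
  - simpl. ring.
  - replace (2 * S m + 1)%nat with (S (S (2 * m + 1))) by lia.
    rewrite zrange_cons, zrange_snoc. cbn [sumR]. rewrite sumR_app.
    replace (- Z.of_nat (S m) + 1)%Z with (- Z.of_nat m)%Z by lia.
    rewrite IHm, zrange_snoc, sumR_app. cbn [sumR].
    replace (Z.abs (- Z.of_nat (S m))) with (1 + Z.of_nat m)%Z by lia.
    replace (Z.abs (- Z.of_nat m + Z.of_nat (2 * m + 1))) with (1 + Z.of_nat m)%Z by lia.
    ring.
Qed.

(** * Lattice points of k triangle_2 *)

Lemma sumR_diamond_row (t y lo : Z) n :
  sumR (fun x => if (Z.abs x + 2 * Z.abs y <=? t)%Z then 1 else 0) (zrange lo n)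
  = IZR (Z.max 0 (Z.min (t - 2 * Z.abs y) (lo + Z.of_nat n - 1)
                  - Z.max (- (t - 2 * Z.abs y)) lo + 1)).
Proof.
  apply sumR_indicator_zrange; intros c Hc;
    destruct (Z.leb_spec (Z.abs c + 2 * Z.abs y) t); auto; lia.
Qed.

Lemma sumR_diamond_rows (F : Z -> R) (m M : nat) :
  (m <= M)%nat -> (forall c, (Z.of_nat m < c)%Z -> F c = 0) ->
  sumR (fun y => F (Z.abs y)) (zrange (- Z.of_nat M) (2 * M + 1))
  = F 0%Z + 2 * sumR F (zrange 1 m).
Proof.
  intros HmM HF. rewrite sumR_abs_zrange.
  replace (zrange 1 M) with (zrange 1 m ++ zrange (1 + Z.of_nat m) (M - m))
    by (rewrite <- zrange_app; f_equal; lia).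
  rewrite sumR_app, (sumR_zero F (zrange _ (M - m))); [ring|].
  intros c Hc. apply In_zrange in Hc. apply HF. lia.
Qed.

Lemma lat_length k : INR (length (lat k)) = 4 * INR k * INR k + 2 * INR k + 1.
Proof.
  set (row := fun c => IZR (Z.max 0 (4 * Z.of_nat k - 4 * c + 1))).
  unfold lat. rewrite INR_length_filter, sumR_list_prod, sumR_comm. cbn [fst snd].
  rewrite (sumR_ext _ (fun y => row (Z.abs y))).
  2:{ intros y _. rewrite sumR_diamond_row. unfold row. f_equal. lia. }
  rewrite sumR_abs_zrange.
  rewrite (sumR_ext row (fun c => (4 * INR k + 1) + (-4) * IZR c)).
  2:{ intros c Hc. apply In_zrange in Hc. unfold row. rewrite Z.max_r by lia.
      rewrite plus_IZR, minus_IZR, !mult_IZR, <- INR_IZR_INZ. ring. }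
  rewrite sumR_affine_zrange. unfold row. rewrite Z.max_r by lia.
  rewrite plus_IZR, minus_IZR, !mult_IZR, <- INR_IZR_INZ. field.
Qed.

Lemma bdry_length k : (1 <= k)%nat -> INR (length (bdry k)) = 4 * INR k.
Proof.
  intros hk.
  set (row := fun c => IZR (Z.max 0 (4 * Z.of_nat k - 4 * c + 1))
                   - IZR (Z.max 0 (4 * Z.of_nat k - 4 * c - 1))).
  assert (Hrow : forall c, (0 <= c <= Z.of_nat k)%Z ->
            row c = if (c =? Z.of_nat k)%Z then 1 else 2).
  { intros c Hc. unfold row. rewrite <- minus_IZR.
    destruct (Z.eqb_spec c (Z.of_nat k)); f_equal; lia. }
  unfold bdry, lat. rewrite INR_length_filter, sumR_filter, sumR_list_prod, sumR_comm.
  cbn [fst snd].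
  rewrite (sumR_ext _ (fun y => row (Z.abs y))).
  2:{ intros y _.
      rewrite (sumR_ext _ (fun x =>
        (if (Z.abs x + 2 * Z.abs y <=? 2 * Z.of_nat k)%Z then 1 else 0)
        - (if (Z.abs x + 2 * Z.abs y <=? 2 * Z.of_nat k - 1)%Z then 1 else 0))).
      - rewrite sumR_minus, !sumR_diamond_row. unfold row. f_equal; f_equal; lia.
      - intros x _.
        destruct (Z.leb_spec (Z.abs x + 2 * Z.abs y) (2 * Z.of_nat k));
        destruct (Z.eqb_spec (Z.abs x + 2 * Z.abs y) (2 * Z.of_nat k));
        destruct (Z.leb_spec (Z.abs x + 2 * Z.abs y) (2 * Z.of_nat k - 1)); lra || lia. }
  rewrite sumR_abs_zrange.
  destruct k as [|k]; [lia|].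
  rewrite zrange_snoc, sumR_app, (sumR_ext row (fun _ => 2)), sumR_const, length_zrange.
  - cbn [sumR]. rewrite !Hrow by lia.
    destruct (Z.eqb_spec 0 (Z.of_nat (S k))), (Z.eqb_spec (1 + Z.of_nat k) (Z.of_nat (S k)));
      try lia.
    rewrite S_INR. ring.
  - intros c Hc. apply In_zrange in Hc. rewrite Hrow by lia.
    destruct (Z.eqb_spec c (Z.of_nat (S k))); [lia | reflexivity].
Qed.

(** * Riemann sums *)

Lemma Un_cv_ext (u v : nat -> R) l : (forall n, u n = v n) -> Un_cv u l -> Un_cv v l.
Proof.
  intros E H eps He. destruct (H eps He) as [N HN]. exists N. intros n Hn. rewrite <- E. auto.
Qed.

Lemma Un_cv_const c : Un_cv (fun _ => c) c.
Proof. intros eps He. exists O. intros n _. unfold Rdist. rewrite Rminus_diag, Rabs_R0. lra. Qed.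

Lemma Un_cv_sumR {A} (u : A -> nat -> R) (a : A -> R) l :
  (forall i, In i l -> Un_cv (u i) (a i)) -> Un_cv (fun n => sumR (fun i => u i n) l) (sumR a l).
Proof.
  induction l as [|i l IH]; intros H; simpl.
  - apply Un_cv_const.
  - apply CV_plus; [apply H; left | apply IH; intros; apply H; right]; auto.
Qed.

Lemma Un_cv_of_rate (u : nat -> R) l C :
  (forall n, Rabs (u n - l) <= C / INR (S n)) -> Un_cv u l.
Proof.
  intros H eps He. destruct (INR_unbounded (C / eps)) as [N HN]. exists N. intros n Hn.
  unfold Rdist. eapply Rle_lt_trans; [apply H|].
  assert (HNn : INR N <= INR n) by (apply le_INR; lia).
  assert (Hn1 : 0 < INR (S n)) by apply lt_0_INR, Nat.lt_0_succ.
  assert (EC : C = C / eps * eps) by (field; lra).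
  rewrite S_INR in *. apply (Rmult_lt_reg_r (INR n + 1)); auto.
  unfold Rdiv at 1. rewrite Rmult_assoc, Rinv_l, Rmult_1_r by lra. nra.
Qed.

Lemma ind_in (D : pt -> Prop) p : D p -> ind D p = 1.
Proof. unfold ind. destruct (excluded_middle_informative (D p)); tauto. Qed.

Lemma ind_out (D : pt -> Prop) p : ~ D p -> ind D p = 0.
Proof. unfold ind. destruct (excluded_middle_informative (D p)); tauto. Qed.

Definition grid (B n : nat) : list (Z * Z) :=
  list_prod (zrange (- Z.of_nat (B * n)) (2 * B * n)) (zrange (- Z.of_nat (B * n)) (2 * B * n)).

Definition riemann_sum (B n : nat) (D : pt -> Prop) (f : pt -> R) (tag : Z * Z -> pt) : R :=
  sumR (fun c => ind D (tag c) * f (tag c)) (grid B n) / (INR n * INR n).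

Definition cell_tagging (n : nat) (tag : Z * Z -> pt) : Prop :=
  forall c, IZR (fst c) / INR n <= fst (tag c) <= (IZR (fst c) + 1) / INR n /\
            IZR (snd c) / INR n <= snd (tag c) <= (IZR (snd c) + 1) / INR n.

Lemma riemann_int_cv B D f I (tags : nat -> Z * Z -> pt) :
  riemann_int B D f I -> (forall n, cell_tagging (S n) (tags n)) ->
  Un_cv (fun n => riemann_sum B (S n) D f (tags n)) I.
Proof.
  intros H Ht eps He. destruct (H eps He) as [N HN]. exists N. intros n Hn.
  apply HN; [lia | lia | apply Ht].
Qed.

Definition corner_tag (n : nat) (c : Z * Z) : pt := (IZR (fst c) / INR n, IZR (snd c) / INR n).

Lemma corner_tag_cells n : cell_tagging (S n) (corner_tag (S n)).
Proof.
  intros c. pose proof (lt_0_INR (S n) (Nat.lt_0_succ n)). unfold corner_tag, Rdiv.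
  cbn [fst snd].
  assert (0 < / INR (S n)) by (apply Rinv_0_lt_compat; lra).
  split; split; nra.
Qed.

Lemma riemann_int_scale B D f h I J c :
  riemann_int B D f I -> riemann_int B D h J -> (forall p, D p -> f p = c * h p) -> I = c * J.
Proof.
  intros HI HJ Hfh.
  apply (UL_sequence _ _ _ (riemann_int_cv _ _ _ _ _ HI corner_tag_cells)).
  apply (Un_cv_ext (fun n => c * riemann_sum B (S n) D h (corner_tag (S n)))).
  - intros n. unfold riemann_sum, Rdiv. rewrite <- Rmult_assoc, <- sumR_scal. f_equal.
    apply sumR_ext. intros x _.
    destruct (excluded_middle_informative (D (corner_tag (S n) x))) as [Hx|Hx].
    + rewrite ind_in, Hfh by auto. ring.
    + rewrite ind_out by auto. ring.
  - apply CV_mult; [apply Un_cv_const | apply (riemann_int_cv _ _ _ _ _ HJ corner_tag_cells)].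
Qed.

(** * The area of k triangle_2 *)

Lemma IZR_div_le_iff z w d : 0 < d -> (IZR z / d <= IZR w / d <-> (z <= w)%Z).
Proof.
  intros Hd. assert (Hd' : 0 < / d) by (apply Rinv_0_lt_compat; auto). unfold Rdiv.
  split; intros H.
  - apply le_IZR. apply (Rmult_le_reg_r (/ d)); auto.
  - apply Rmult_le_compat_r; [lra | apply IZR_le; auto].
Qed.

Lemma kTri2_corner_tag k n a b : (0 < n)%nat ->
  kTri2 k (corner_tag n (a, b)) <-> (Z.abs a + 2 * Z.abs b <= 2 * (Z.of_nat k * Z.of_nat n))%Z.
Proof.
  intros Hn. pose proof (lt_0_INR _ Hn) as HN.
  unfold kTri2, corner_tag. cbn [fst snd].
  replace (Rabs (IZR a / INR n) / 2 + Rabs (IZR b / INR n))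
    with (IZR (Z.abs a + 2 * Z.abs b) / (2 * INR n)).
  2:{ rewrite plus_IZR, mult_IZR, !abs_IZR. unfold Rdiv.
      rewrite !Rabs_mult, Rabs_inv, (Rabs_pos_eq (INR n)) by lra. field. lra. }
  replace (INR k) with (IZR (2 * (Z.of_nat k * Z.of_nat n)) / (2 * INR n))
    by (rewrite !mult_IZR, <- !INR_IZR_INZ; field; lra).
  apply IZR_div_le_iff. lra.
Qed.

Lemma count_diamond_grid m : (1 <= m)%nat ->
  sumR (fun c => if (Z.abs (fst c) + 2 * Z.abs (snd c) <=? 2 * Z.of_nat m)%Z then 1 else 0)
    (list_prod (zrange (- Z.of_nat (2 * m)) (4 * m)) (zrange (- Z.of_nat (2 * m)) (4 * m)))
  = 4 * INR m * INR m + 2 * INR m.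
Proof.
  intros Hm.
  set (row := fun c => IZR (Z.max 0 (Z.min (2 * Z.of_nat m - 2 * c) (2 * Z.of_nat m - 1)
                                   + (2 * Z.of_nat m - 2 * c) + 1))).
  rewrite sumR_list_prod, sumR_comm. cbn [fst snd].
  rewrite (sumR_ext _ (fun y => row (Z.abs y))).
  2:{ intros y _. rewrite sumR_diamond_row. unfold row. f_equal. lia. }
  replace (zrange (- Z.of_nat (2 * m)) (4 * m))
    with ((- Z.of_nat (2 * m))%Z :: zrange (- Z.of_nat (2 * m - 1)) (2 * (2 * m - 1) + 1)).
  2:{ replace (4 * m)%nat with (S (2 * (2 * m - 1) + 1)) by lia.
      rewrite zrange_cons. do 2 f_equal. lia. }
  cbn [sumR]. rewrite (sumR_diamond_rows row m (2 * m - 1)).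
  2: lia.
  2:{ intros c Hc. unfold row. rewrite Z.max_l by lia. reflexivity. }
  rewrite (sumR_ext row (fun c => (4 * INR m + 1) + (-4) * IZR c)).
  2:{ intros c Hc. apply In_zrange in Hc. unfold row. rewrite Z.max_r, Z.min_l by lia.
      rewrite !plus_IZR, !minus_IZR, !mult_IZR, <- INR_IZR_INZ. ring. }
  rewrite sumR_affine_zrange. unfold row.
  rewrite Z.max_l, Z.max_r, Z.min_r by lia.
  rewrite !plus_IZR, !minus_IZR, !mult_IZR, <- INR_IZR_INZ. field.
Qed.

Lemma riemann_sum_kTri2_one k n : (1 <= k)%nat -> (0 < n)%nat ->
  riemann_sum (2 * k) n (kTri2 k) (fun _ => 1) (corner_tag n)
  = 4 * INR k * INR k + 2 * INR k / INR n.
Proof.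
  intros hk Hn. pose proof (lt_0_INR _ Hn) as HN.
  unfold riemann_sum, grid.
  replace (2 * k * n)%nat with (2 * (k * n))%nat by lia.
  replace (2 * (2 * k) * n)%nat with (4 * (k * n))%nat by lia.
  rewrite (sumR_ext _ (fun c => if (Z.abs (fst c) + 2 * Z.abs (snd c)
                                      <=? 2 * Z.of_nat (k * n))%Z then 1 else 0)).
  - rewrite count_diamond_grid by nia. rewrite mult_INR. field. lra.
  - intros [a b] _. cbn [fst snd]. rewrite Nat2Z.inj_mul.
    destruct (Z.leb_spec (Z.abs a + 2 * Z.abs b) (2 * (Z.of_nat k * Z.of_nat n))) as [H|H].
    + rewrite ind_in by (apply kTri2_corner_tag; auto). ring.
    + rewrite ind_out by (rewrite kTri2_corner_tag; lia || auto). ring.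
Qed.

Lemma area_kTri2 k vol : (1 <= k)%nat ->
  riemann_int (2 * k) (kTri2 k) (fun _ => 1) vol -> vol = 4 * INR k * INR k.
Proof.
  intros hk H.
  apply (UL_sequence _ _ _ (riemann_int_cv _ _ _ _ _ H corner_tag_cells)).
  apply (Un_cv_of_rate _ _ (2 * INR k)). intros n.
  rewrite riemann_sum_kTri2_one by lia.
  assert (0 < INR (S n)) by apply lt_0_INR, Nat.lt_0_succ.
  replace (4 * INR k * INR k + 2 * INR k / INR (S n) - 4 * INR k * INR k)
    with (2 * INR k / INR (S n)) by ring.
  rewrite Rabs_pos_eq; [lra|].
  apply Rmult_le_pos; [pose proof (pos_INR k) | left; apply Rinv_0_lt_compat]; lra.
Qed.

(** * The triangles T_i and the area of T_0 *)

(* [fan_form k j] vanishes on the ray through [a_pt k j]. *)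
Definition fan_form (k j : nat) (x y : R) : R := (INR k - INR j) * x - 2 * INR j * y.

Lemma T_iff k i x y : (i < k)%nat ->
  T k i (x, y) <->
  0 <= fan_form k i x y /\ fan_form k (S i) x y <= 0 /\ x + 2 * y <= 2 * INR k.
Proof.
  intros Hik. assert (Hk : 0 < INR k) by (apply lt_0_INR; lia).
  unfold T, fan_form, a_pt. cbn [fst snd]. rewrite S_INR. split.
  - intros (l0 & l1 & l2 & H0 & H1 & H2 & Hs & -> & ->). nra.
  - intros (Hi & HSi & Hsum).
    exists ((2 * INR k - (x + 2 * y)) / (2 * INR k)),
           (- ((INR k - (INR i + 1)) * x - 2 * (INR i + 1) * y) / (2 * INR k)),
           (((INR k - INR i) * x - 2 * INR i * y) / (2 * INR k)).
    assert (0 < / (2 * INR k)) by (apply Rinv_0_lt_compat; lra).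
    unfold Rdiv. repeat split; try nra; field; lra.
Qed.

Lemma T_in_quadrant k i p : (i < k)%nat -> T k i p -> 0 <= fst p /\ 0 <= snd p.
Proof.
  intros Hik (l0 & l1 & l2 & H0 & H1 & H2 & Hs & -> & ->). unfold a_pt. cbn [fst snd].
  assert (INR (S i) <= INR k) by (apply le_INR; lia). rewrite S_INR in *.
  pose proof (pos_INR i). split; nra.
Qed.

Lemma T0_corner_tag k n a b : (1 <= k)%nat -> (0 < n)%nat ->
  T k 0 (corner_tag n (a, b)) <->
  (0 <= a /\ (Z.of_nat k - 1) * a <= 2 * b /\ 2 * b <= 2 * (Z.of_nat k * Z.of_nat n) - a)%Z.
Proof.
  intros hk Hn. pose proof (lt_0_INR _ Hn) as HN.
  unfold corner_tag. cbn [fst snd]. rewrite T_iff by lia. unfold fan_form.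
  replace ((INR k - INR 0) * (IZR a / INR n) - 2 * INR 0 * (IZR b / INR n))
    with (IZR (Z.of_nat k * a) / INR n) by (rewrite mult_IZR, <- INR_IZR_INZ; simpl; field; lra).
  replace ((INR k - INR 1) * (IZR a / INR n) - 2 * INR 1 * (IZR b / INR n))
    with (IZR ((Z.of_nat k - 1) * a - 2 * b) / INR n)
    by (rewrite minus_IZR, !mult_IZR, minus_IZR, <- INR_IZR_INZ; simpl; field; lra).
  replace (IZR a / INR n + 2 * (IZR b / INR n)) with (IZR (a + 2 * b) / INR n)
    by (rewrite plus_IZR, mult_IZR; field; lra).
  replace (2 * INR k) with (IZR (2 * (Z.of_nat k * Z.of_nat n)) / INR n)
    by (rewrite !mult_IZR, <- !INR_IZR_INZ; field; lra).
  replace 0 with (IZR 0 / INR n) by (field; lra).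
  rewrite !IZR_div_le_iff by lra. nia.
Qed.

Lemma count_even_between p q lo n : (2 * lo <= p)%Z -> (q < 2 * (lo + Z.of_nat n))%Z ->
  IZR (Z.max 0 (q - p))
  <= 2 * sumR (fun b => if ((p <=? 2 * b)%Z && (2 * b <=? q)%Z)%bool then 1 else 0) (zrange lo n)
  <= IZR (Z.max 0 (q - p + 2)).
Proof.
  intros Hlo Hhi.
  rewrite (sumR_indicator_zrange _ ((p + 1) / 2) (q / 2)), <- mult_IZR.
  - split; apply IZR_le; Z.div_mod_to_equations; lia.
  - intros c Hc. destruct (Z.leb_spec p (2 * c)), (Z.leb_spec (2 * c) q); simpl; auto;
      Z.div_mod_to_equations; lia.
  - intros c Hc. destruct (Z.leb_spec p (2 * c)), (Z.leb_spec (2 * c) q); simpl; auto;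
      Z.div_mod_to_equations; lia.
Qed.

Definition T0_column (k n : nat) (a : Z) : R :=
  sumR (fun b => ind (T k 0) (corner_tag n (a, b)) * 1)
    (zrange (- Z.of_nat (2 * k * n)) (2 * (2 * k) * n)).

Lemma T0_column_neg k n a : (1 <= k)%nat -> (0 < n)%nat -> (a < 0)%Z -> T0_column k n a = 0.
Proof.
  intros hk Hn Ha. apply sumR_zero. intros b _.
  rewrite ind_out; [ring|]. rewrite T0_corner_tag by auto. lia.
Qed.

Lemma T0_column_bounds k n a : (1 <= k)%nat -> (0 < n)%nat -> (0 <= a)%Z ->
  IZR (Z.max 0 (2 * (Z.of_nat k * Z.of_nat n) - Z.of_nat k * a))
  <= 2 * T0_column k n a
  <= IZR (Z.max 0 (2 * (Z.of_nat k * Z.of_nat n) - Z.of_nat k * a + 2)).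
Proof.
  intros hk Hn Ha.
  set (p := ((Z.of_nat k - 1) * a)%Z). set (q := (2 * (Z.of_nat k * Z.of_nat n) - a)%Z).
  replace (2 * (Z.of_nat k * Z.of_nat n) - Z.of_nat k * a)%Z with (q - p)%Z
    by (unfold p, q; ring).
  unfold T0_column.
  rewrite (sumR_ext _ (fun b => if ((p <=? 2 * b)%Z && (2 * b <=? q)%Z)%bool then 1 else 0)).
  - apply count_even_between; unfold p, q; nia.
  - intros b _. destruct (Z.leb_spec p (2 * b)), (Z.leb_spec (2 * b) q); simpl.
    all: (rewrite ind_in by (apply T0_corner_tag; auto; unfold p, q in *; lia); ring)
      || (rewrite ind_out by (rewrite T0_corner_tag by auto; unfold p, q in *; lia); ring).
Qed.

Lemma sum_T0_columns_left k n : (1 <= k)%nat -> (0 < n)%nat ->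
  INR k * INR n * INR n + INR k * INR n / 2
  <= sumR (T0_column k n) (zrange 0 (2 * n))
  <= INR k * INR n * INR n + INR k * INR n / 2 + 2 * INR n.
Proof.
  intros hk Hn.
  set (L := fun a => INR k * INR n + (- INR k / 2) * IZR a).
  assert (HL : sumR L (zrange 0 (2 * n)) = INR k * INR n * INR n + INR k * INR n / 2)
    by (unfold L; rewrite sumR_affine_zrange, mult_INR; simpl; field).
  assert (HL1 : sumR (fun a => L a + 1) (zrange 0 (2 * n))
                = INR k * INR n * INR n + INR k * INR n / 2 + 2 * INR n)
    by (rewrite sumR_plus, sumR_const, length_zrange, mult_INR, HL; simpl; ring).
  rewrite <- HL1, <- HL.
  split; apply sumR_le; intros a Ha; apply In_zrange in Ha;
    destruct (T0_column_bounds k n a hk Hn ltac:(lia)) as [H1 H2];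
    rewrite Z.max_r in H1, H2 by nia; unfold L.
  - rewrite minus_IZR, !mult_IZR, <- !INR_IZR_INZ in H1. lra.
  - rewrite plus_IZR, minus_IZR, !mult_IZR, <- !INR_IZR_INZ in H2. lra.
Qed.

Lemma sum_T0_columns_right k n m : (1 <= k)%nat -> (0 < n)%nat -> (2 * n + m <= 2 * k * n)%nat ->
  0 <= sumR (T0_column k n) (zrange (Z.of_nat (2 * n)) m) <= 1.
Proof.
  intros hk Hn Hm.
  assert (Hcol : forall a, (Z.of_nat (2 * n) <= a < Z.of_nat (2 * k * n))%Z ->
            0 <= T0_column k n a <= if Z.eq_dec a (Z.of_nat (2 * n)) then 1 else 0).
  { intros a Ha. destruct (T0_column_bounds k n a hk Hn ltac:(lia)) as [H1 H2].
    pose proof (IZR_le _ _ (Z.le_max_l 0 (2 * (Z.of_nat k * Z.of_nat n) - Z.of_nat k * a))).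
    destruct (Z.eq_dec a (Z.of_nat (2 * n))) as [->|Hne].
    - replace (Z.max 0 _) with 2%Z in H2 by nia. lra.
    - replace (Z.max 0 _) with 0%Z in H2 by nia. lra. }
  split.
  - rewrite <- (sumR_zero (fun _ => 0) (zrange (Z.of_nat (2 * n)) m)) by auto.
    apply sumR_le. intros a Ha. apply In_zrange in Ha. apply Hcol. lia.
  - eapply Rle_trans.
    + apply (sumR_le _ (fun a => if Z.eq_dec a (Z.of_nat (2 * n)) then 1 else 0)).
      intros a Ha. apply In_zrange in Ha. apply Hcol. lia.
    + rewrite (sumR_indicator_zrange _ (Z.of_nat (2 * n)) (Z.of_nat (2 * n))).
      * apply IZR_le. lia.
      * intros c Hc. destruct (Z.eq_dec c (Z.of_nat (2 * n))); [auto | lia].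
      * intros c Hc. destruct (Z.eq_dec c (Z.of_nat (2 * n))); [lia | auto].
Qed.

(* Columns a < 0 are empty, a column 0 <= a < 2n holds about kn - ka/2 cells, and among
   the columns a >= 2n only a = 2n can hold a cell. *)
Lemma sum_T0_columns k n : (1 <= k)%nat -> (0 < n)%nat ->
  INR k * INR n * INR n
  <= sumR (T0_column k n) (zrange (- Z.of_nat (2 * k * n)) (2 * (2 * k) * n))
  <= INR k * INR n * INR n + (INR k + 3) * INR n.
Proof.
  intros hk Hn.
  assert (HK : 1 <= INR k) by (apply (le_INR 1); lia).
  assert (HN : 1 <= INR n) by (apply (le_INR 1); lia).
  replace (2 * (2 * k) * n)%nat with (2 * k * n + (2 * n + (2 * k * n - 2 * n)))%nat by nia.
  rewrite !zrange_app, !sumR_app.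
  rewrite (sumR_zero _ (zrange (- Z.of_nat (2 * k * n)) (2 * k * n)))
    by (intros a Ha; apply In_zrange in Ha; apply T0_column_neg; auto; lia).
  replace (- Z.of_nat (2 * k * n) + Z.of_nat (2 * k * n))%Z with 0%Z by lia.
  replace (0 + Z.of_nat (2 * n))%Z with (Z.of_nat (2 * n)) by lia.
  pose proof (sum_T0_columns_left k n hk Hn).
  pose proof (sum_T0_columns_right k n (2 * k * n - 2 * n) hk Hn ltac:(nia)).
  assert (0 <= INR k * INR n) by nra. lra.
Qed.

Lemma riemann_sum_T0_one k n : (1 <= k)%nat -> (0 < n)%nat ->
  Rabs (riemann_sum (2 * k) n (T k 0) (fun _ => 1) (corner_tag n) - INR k)
  <= (INR k + 3) / INR n.
Proof.
  intros hk Hn. pose proof (lt_0_INR _ Hn) as HN.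
  pose proof (sum_T0_columns k n hk Hn) as Hs.
  unfold riemann_sum, grid. rewrite sumR_list_prod. fold (T0_column k n).
  set (S := sumR (T0_column k n) _) in *.
  replace (S / (INR n * INR n) - INR k) with ((S - INR k * INR n * INR n) / (INR n * INR n))
    by (field; lra).
  unfold Rdiv. rewrite Rabs_mult, Rabs_pos_eq, Rabs_pos_eq by
    (try apply Rlt_le, Rinv_0_lt_compat; nra).
  apply (Rmult_le_reg_r (INR n * INR n)); [nra|].
  rewrite Rmult_assoc, Rinv_l, Rmult_1_r by nra.
  replace ((INR k + 3) * / INR n * (INR n * INR n)) with ((INR k + 3) * INR n) by (field; lra).
  lra.
Qed.

Lemma area_T0 k vol : (1 <= k)%nat ->
  riemann_int (2 * k) (T k 0) (fun _ => 1) vol -> vol = INR k.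
Proof.
  intros hk H.
  apply (UL_sequence _ _ _ (riemann_int_cv _ _ _ _ _ H corner_tag_cells)).
  apply (Un_cv_of_rate _ _ (INR k + 3)). intros n. apply riemann_sum_T0_one; lia.
Qed.

(** * Tiling k triangle_2 by the W_2-images of the T_i *)

Lemma sumR_sign_changes (s f : nat -> R) k :
  0 < s O -> (forall i, s (S i) < s i) -> (forall i, (i <= k)%nat -> s i <> 0) ->
  (forall i, (i < k)%nat ->
     (f i = 1 /\ 0 < s i /\ s (S i) < 0) \/ (f i = 0 /\ ~ (0 < s i /\ s (S i) < 0))) ->
  sumR f (seq 0 k) = if Rlt_dec (s k) 0 then 1 else 0.
Proof.
  intros H0 Hdec Hnz Hf. induction k.
  - simpl. destruct (Rlt_dec (s O) 0); lra.
  - rewrite seq_S, sumR_app, IHk by auto. cbn [sumR Nat.add].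
    pose proof (Hdec k). pose proof (Hnz k ltac:(lia)). pose proof (Hnz (S k) ltac:(lia)).
    destruct (Hf k ltac:(lia)) as [[-> Hc] | [-> Hc]];
      destruct (Rlt_dec (s k) 0), (Rlt_dec (s (S k)) 0); try lra;
      exfalso; apply Hc; lra.
Qed.

(* Generic points lie on no edge shared by two tiles, so [fan_tiles] counts them once. *)
Definition generic (k : nat) (p : pt) : Prop :=
  fst p <> 0 /\ snd p <> 0 /\
  forall j, (j <= k)%nat -> fan_form k j (Rabs (fst p)) (Rabs (snd p)) <> 0.

Definition kTri2_pos (k : nat) (p : pt) : Prop :=
  0 < fst p /\ 0 < snd p /\ fst p + 2 * snd p <= 2 * INR k.

Lemma fan_tiles k p : (1 <= k)%nat -> generic k p ->
  sumR (fun i => ind (T k i) p) (seq 0 k) = ind (kTri2_pos k) p.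
Proof.
  intros hk (Hx & Hy & Hu). destruct p as [x y]. cbn [fst snd] in *.
  assert (Hk : 0 < INR k) by (apply lt_0_INR; lia).
  destruct (Rlt_dec 0 x) as [Hxp|Hxn]; [destruct (Rlt_dec 0 y) as [Hyp|Hyn]|].
  2,3: rewrite ind_out by (unfold kTri2_pos; cbn; tauto);
       apply sumR_zero; intros i Hi; apply in_seq in Hi;
       rewrite ind_out; auto; intros HT; apply T_in_quadrant in HT; cbn in HT; lra || lia.
  rewrite Rabs_pos_eq, (Rabs_pos_eq y) in Hu by lra.
  destruct (Rle_dec (x + 2 * y) (2 * INR k)) as [Hc|Hc].
  - rewrite ind_in by (unfold kTri2_pos; cbn; auto).
    (* j |-> fan_form k j x y decreases from k x > 0 to -2 k y < 0 and never vanishes. *)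
    rewrite (sumR_sign_changes (fun j => fan_form k j x y)); unfold fan_form in *.
    + destruct (Rlt_dec _ 0) as [|Hnk]; auto. exfalso; apply Hnk. nra.
    + simpl INR. nra.
    + intros i. rewrite S_INR. nra.
    + auto.
    + intros i Hi. destruct (excluded_middle_informative (T k i (x, y))) as [HT|HT].
      * left. rewrite ind_in by auto. apply T_iff in HT; auto. unfold fan_form in HT.
        pose proof (Hu i ltac:(lia)). pose proof (Hu (S i) ltac:(lia)). lra.
      * right. rewrite ind_out by auto. split; auto. intros [h1 h2]. apply HT.
        apply T_iff; auto. unfold fan_form. lra.
  - rewrite ind_out by (unfold kTri2_pos; cbn; tauto). apply sumR_zero. intros i Hi.
    apply in_seq in Hi. rewrite ind_out; auto. rewrite T_iff by lia. lra.
Qed.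

Lemma T_sub_kTri2 k i p : (i < k)%nat -> T k i p -> kTri2 k p.
Proof.
  intros Hik HT. pose proof (T_in_quadrant k i p Hik HT) as [Hx Hy].
  destruct p as [x y]. apply T_iff in HT as (_ & _ & Hs); auto.
  unfold kTri2. cbn [fst snd] in *. rewrite !Rabs_pos_eq by lra. lra.
Qed.

(* An element of W_2 is encoded by the coordinates it negates; on grid cells, negating a
   coordinate maps cell a to cell -a-1. *)
Definition flip (b : bool) (x : R) : R := if b then - x else x.
Definition flip_cell (b : bool) (a : Z) : Z := if b then (- a - 1)%Z else a.

Definition reflect (s : bool * bool) (p : pt) : pt := (flip (fst s) (fst p), flip (snd s) (snd p)).
Definition reflect_cell (s : bool * bool) (c : Z * Z) : Z * Z :=
  (flip_cell (fst s) (fst c), flip_cell (snd s) (snd c)).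

Definition W2 : list (bool * bool) :=
  (false, false) :: (true, false) :: (false, true) :: (true, true) :: nil.

Lemma Rabs_flip b x : Rabs (flip b x) = Rabs x.
Proof. destruct b; simpl; [apply Rabs_Ropp | auto]. Qed.

Lemma generic_reflect k s p : generic k p -> generic k (reflect s p).
Proof.
  unfold generic, reflect. cbn [fst snd]. rewrite !Rabs_flip. intros (Hx & Hy & Hu).
  destruct s as [[|] [|]]; simpl; repeat split; auto; lra.
Qed.

Lemma kTri2_reflect k s p : kTri2 k (reflect s p) <-> kTri2 k p.
Proof. unfold kTri2, reflect. cbn [fst snd]. rewrite !Rabs_flip. tauto. Qed.

Lemma W2_invariant_reflect k g s p : W2_invariant k g -> kTri2 k p -> g (reflect s p) = g p.
Proof.
  intros HW Hp. destruct p as [x y].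
  pose proof (HW x y Hp) as [Hgx Hgy].
  destruct s as [[|] [|]]; unfold reflect, flip; cbn [fst snd]; auto.
  assert (Hp' : kTri2 k (x, - y)) by (unfold kTri2 in *; cbn in *; rewrite Rabs_Ropp; auto).
  rewrite (proj1 (HW x (- y) Hp')). auto.
Qed.

Lemma ind_kTri2_W2 k p : fst p <> 0 -> snd p <> 0 ->
  ind (kTri2 k) p = sumR (fun s => ind (kTri2_pos k) (reflect s p)) W2.
Proof.
  destruct p as [x y]. cbn [fst snd]. intros Hx Hy.
  assert (Habs : ind (kTri2 k) (x, y) = ind (kTri2_pos k) (Rabs x, Rabs y)).
  { assert (0 < Rabs x) by (apply Rabs_pos_lt; auto).
    assert (0 < Rabs y) by (apply Rabs_pos_lt; auto).
    unfold ind, kTri2, kTri2_pos. cbn [fst snd].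
    destruct (excluded_middle_informative _), (excluded_middle_informative _);
      auto; exfalso; lra. }
  assert (Hout : forall a b, ~ (0 < a /\ 0 < b) -> ind (kTri2_pos k) (a, b) = 0).
  { intros a b Hab. apply ind_out. unfold kTri2_pos. cbn. tauto. }
  unfold W2. cbn [sumR]. unfold reflect, flip. cbn [fst snd]. rewrite Habs.
  destruct (Rlt_dec 0 x), (Rlt_dec 0 y).
  - rewrite (Rabs_pos_eq x), (Rabs_pos_eq y), (Hout (- x) y), (Hout x (- y)), (Hout (- x) (- y))
      by (intros []; lra) || lra. ring.
  - rewrite (Rabs_pos_eq x), (Rabs_left y), (Hout x y), (Hout (- x) y), (Hout (- x) (- y))
      by (intros []; lra) || lra. ring.
  - rewrite (Rabs_left x), (Rabs_pos_eq y), (Hout x y), (Hout x (- y)), (Hout (- x) (- y))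
      by (intros []; lra) || lra. ring.
  - rewrite (Rabs_left x), (Rabs_left y), (Hout x y), (Hout (- x) y), (Hout x (- y))
      by (intros []; lra) || lra. ring.
Qed.

Lemma ind_mul_kTri2_W2 k g p : (1 <= k)%nat -> W2_invariant k g -> generic k p ->
  ind (kTri2 k) p * g p
  = sumR (fun s => sumR (fun i => ind (T k i) (reflect s p) * g (reflect s p)) (seq 0 k)) W2.
Proof.
  intros hk HW Hg. pose proof Hg as (Hx & Hy & _).
  rewrite ind_kTri2_W2, Rmult_comm, <- sumR_scal by auto. apply sumR_ext. intros s _.
  rewrite <- fan_tiles, <- sumR_scal by (auto using generic_reflect).
  apply sumR_ext. intros i Hi. apply in_seq in Hi.
  destruct (excluded_middle_informative (T k i (reflect s p))) as [HT|HT].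
  - rewrite ind_in, (W2_invariant_reflect k) by
      (auto; apply (kTri2_reflect k s), (T_sub_kTri2 k i); auto; lia). ring.
  - rewrite ind_out by auto. ring.
Qed.

Lemma exists_not_In_between (L : list R) a b : a < b -> exists y, a < y < b /\ ~ In y L.
Proof.
  revert a b. induction L as [|x L IH]; intros a b Hab.
  - exists ((a + b) / 2). split; [lra | auto].
  - destruct (Rle_dec x ((a + b) / 2)).
    + destruct (IH ((a + b) / 2) b ltac:(lra)) as [y [Hy Hn]].
      exists y. split; [lra|]. intros [E|E]; [lra | auto].
    + destruct (IH a ((a + b) / 2) ltac:(lra)) as [y [Hy Hn]].
      exists y. split; [lra|]. intros [E|E]; [lra | auto].
Qed.

Definition nongeneric_ordinates (k : nat) (x : R) : list R :=
  0 :: flat_map (fun j => let r := (INR k - INR j) * Rabs x / (2 * INR j) in r :: - r :: nil)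
                (seq 1 k).

Lemma generic_of_not_In k x y : (1 <= k)%nat -> x <> 0 ->
  ~ In y (nongeneric_ordinates k x) -> generic k (x, y).
Proof.
  intros hk Hx Hy. assert (Hax : 0 < Rabs x) by (apply Rabs_pos_lt; auto).
  unfold generic, fan_form. cbn [fst snd]. split; [auto | split].
  - intros E. apply Hy. left. auto.
  - intros [|j] Hj E.
    + change (INR 0) with 0 in E. pose proof (lt_0_INR k ltac:(lia)). nra.
    + apply Hy. right. apply in_flat_map. exists (S j). split; [apply in_seq; lia|].
      assert (HJ : 0 < INR (S j)) by (apply lt_0_INR; lia).
      assert (E' : Rabs y = (INR k - INR (S j)) * Rabs x / (2 * INR (S j))).
      { apply (Rmult_eq_reg_r (2 * INR (S j))); [|lra].
        unfold Rdiv. rewrite Rmult_assoc, Rinv_l by lra. lra. }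
      destruct (Rcase_abs y).
      * rewrite Rabs_left in E' by lra. right. left. lra.
      * rewrite Rabs_pos_eq in E' by lra. left. lra.
Qed.

Lemma generic_tagging k n : (1 <= k)%nat -> (0 < n)%nat ->
  exists t, cell_tagging n t /\ forall c, generic k (t c).
Proof.
  intros hk Hn. pose proof (lt_0_INR _ Hn) as HN.
  set (x := fun a : Z => (IZR a + / 2) / INR n).
  assert (Hx : forall a, x a <> 0).
  { intros a E. unfold x, Rdiv in E. apply Rmult_integral in E as [E|E].
    - assert (E2 : IZR (2 * a + 1) = 0) by (rewrite plus_IZR, mult_IZR; lra).
      apply eq_IZR_R0 in E2. lia.
    - apply Rinv_neq_0_compat in E; lra. }
  assert (Hy : forall c : Z * Z, exists y, IZR (snd c) / INR n < y < (IZR (snd c) + 1) / INR n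
                                      /\ ~ In y (nongeneric_ordinates k (x (fst c)))).
  { intros c. apply exists_not_In_between. unfold Rdiv.
    apply Rmult_lt_compat_r; [apply Rinv_0_lt_compat|]; lra. }
  exists (fun c => (x (fst c), proj1_sig (constructive_indefinite_description _ (Hy c)))).
  split; intros c; destruct (constructive_indefinite_description _ (Hy c)) as [y [Hyc Hny]];
    cbn [fst snd proj1_sig].
  - unfold x, Rdiv. assert (0 < / INR n) by (apply Rinv_0_lt_compat; lra).
    split; split; nra.
  - apply generic_of_not_In; auto.
Qed.

Definition reflect_tag (s : bool * bool) (t : Z * Z -> pt) : Z * Z -> pt :=
  fun c => reflect s (t (reflect_cell s c)).

Lemma flip_cell_bounds b a v N : 0 < N ->
  IZR (flip_cell b a) / N <= v <= (IZR (flip_cell b a) + 1) / N ->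
  IZR a / N <= flip b v <= (IZR a + 1) / N.
Proof.
  intros HN Hv. destruct b; simpl in *; auto.
  rewrite minus_IZR, opp_IZR in Hv. unfold Rdiv in *.
  replace ((- IZR a - 1 + 1) * / N) with (- (IZR a * / N)) in Hv by ring.
  replace ((- IZR a - 1) * / N) with (- ((IZR a + 1) * / N)) in Hv by ring.
  lra.
Qed.

Lemma reflect_tag_cells n s t : (0 < n)%nat -> cell_tagging n t -> cell_tagging n (reflect_tag s t).
Proof.
  intros Hn Ht c. pose proof (lt_0_INR _ Hn).
  destruct (Ht (reflect_cell s c)) as [Hx Hy]. unfold reflect_tag, reflect. cbn [fst snd] in *.
  split; apply flip_cell_bounds; auto.
Qed.

Lemma reflect_cell_involutive s c : reflect_cell s (reflect_cell s c) = c.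
Proof. destruct s as [[|] [|]], c; unfold reflect_cell; simpl; f_equal; lia. Qed.

Lemma reflect_cell_grid B n s c : In c (grid B n) -> In (reflect_cell s c) (grid B n).
Proof.
  destruct c as [a b], s as [[|] [|]]; unfold reflect_cell, flip_cell, grid; cbn [fst snd];
    rewrite !in_prod_iff, !In_zrange; lia.
Qed.

Lemma riemann_sum_kTri2_W2 k n g t : (1 <= k)%nat -> W2_invariant k g ->
  (forall c, generic k (t c)) ->
  riemann_sum (2 * k) n (kTri2 k) g t
  = sumR (fun s => sumR (fun i => riemann_sum (2 * k) n (T k i) g (reflect_tag s t)) (seq 0 k)) W2.
Proof.
  intros hk HW Hg. unfold riemann_sum.
  rewrite (sumR_ext _ (fun c => sumR (fun s => sumR (fun i =>
             ind (T k i) (reflect s (t c)) * g (reflect s (t c))) (seq 0 k)) W2))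
    by (intros; apply ind_mul_kTri2_W2; auto).
  rewrite sumR_comm, <- sumR_div. apply sumR_ext. intros s _.
  rewrite sumR_comm, <- sumR_div. apply sumR_ext. intros i _. f_equal.
  set (F := fun q => ind (T k i) q * g q).
  change (sumR (fun c => F (reflect s (t c))) (grid (2 * k) n)
          = sumR (fun c => F (reflect_tag s t c)) (grid (2 * k) n)).
  rewrite <- (sumR_involution (fun c => F (reflect_tag s t c)) (reflect_cell s)).
  - apply sumR_ext. intros c _. unfold reflect_tag. rewrite reflect_cell_involutive. auto.
  - apply NoDup_list_prod; apply NoDup_zrange.
  - apply reflect_cell_involutive.
  - apply reflect_cell_grid.
Qed.

Lemma integral_kTri2_W2 k g I IT : (1 <= k)%nat -> W2_invariant k g ->
  riemann_int (2 * k) (kTri2 k) g I ->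
  (forall i, (i < k)%nat -> riemann_int (2 * k) (T k i) g (IT i)) ->
  I = 4 * sumR IT (seq 0 k).
Proof.
  intros hk HW HI HIT.
  set (tags := fun n => proj1_sig (constructive_indefinite_description _
                                    (generic_tagging k (S n) hk (Nat.lt_0_succ n)))).
  assert (Htags : forall n, cell_tagging (S n) (tags n) /\ forall c, generic k (tags n c))
    by (intros n; unfold tags; destruct constructive_indefinite_description; auto).
  apply (UL_sequence _ _ _ (riemann_int_cv _ _ _ _ _ HI (fun n => proj1 (Htags n)))).
  replace (4 * sumR IT (seq 0 k)) with (sumR (fun _ => sumR IT (seq 0 k)) W2)
    by (rewrite sumR_const; simpl; ring).
  apply (Un_cv_ext (fun n => sumR (fun s => sumR (fun i =>
           riemann_sum (2 * k) (S n) (T k i) g (reflect_tag s (tags n))) (seq 0 k)) W2)).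
  - intros n. symmetry. apply riemann_sum_kTri2_W2; auto. apply Htags.
  - apply Un_cv_sumR. intros s _. apply Un_cv_sumR. intros i Hi. apply in_seq in Hi.
    apply riemann_int_cv; [apply HIT; lia|].
    intros n. apply reflect_tag_cells; [lia | apply Htags].
Qed.

(** * The inequality *)

Lemma mean_le_of_excess_bound (V N S I E : R) : 0 < V -> 0 < N ->
  S - I <= E -> E <= (N - V) / V * I ->
  / N * S <= / V * I /\ (/ V * I = / N * S -> S - I = E).
Proof.
  intros HV HN Ha Hb.
  assert (HS : S <= N / V * I)
    by (replace (N / V * I) with (I + (N - V) / V * I) by (field; lra); lra).
  assert (HN' : 0 < / N) by (apply Rinv_0_lt_compat; auto).
  split.
  - apply Rle_trans with (/ N * (N / V * I)); [apply Rmult_le_compat_l; lra | right; field; lra].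
  - intros Heq. assert (S - I = (N - V) / V * I); [|lra].
    replace S with (N * (/ N * S)) by (field; lra). rewrite <- Heq. field. lra.
Qed.

Lemma lat_in_kTri2 k q : In q (lat k) -> kTri2 k (Zpt q).
Proof.
  intros Hq. unfold lat in Hq. apply filter_In in Hq as [_ Hq]. apply Z.leb_le, IZR_le in Hq.
  destruct q as [a b]. unfold kTri2, Zpt. cbn [fst snd] in *.
  rewrite <- !abs_IZR. rewrite plus_IZR, !mult_IZR, <- INR_IZR_INZ in Hq. lra.
Qed.

Lemma sum_lat_const k g c : (forall p, kTri2 k p -> g p = c) ->
  sum_lat k g = c * INR (length (lat k)).
Proof.
  intros Hc. unfold sum_lat. rewrite <- sumR_const. apply sumR_ext.
  intros q Hq. apply Hc, lat_in_kTri2. auto.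
Qed.

Theorem lemma4p1 (k : nat) (hk : (1 <= k)%nat)
  (delta : Z * Z -> R) (hdelta : sumR delta (lat k) = 1)
  (g : pt -> R) (hg : in_PL_W2 k g)
  (Itot : R) (HItot : riemann_int (2 * k) (kTri2 k) g Itot)
  (IT : nat -> R) (HIT : forall i, (i < k)%nat -> riemann_int (2 * k) (T k i) g (IT i))
  (vtot : R) (Hvtot : riemann_int (2 * k) (kTri2 k) (fun _ => 1) vtot)
  (v0 : R) (Hv0 : riemann_int (2 * k) (T k 0) (fun _ => 1) v0)
  (ha : sum_lat k g - Itot <= / 2 * sum_bdry k g + sum_delta k delta g /\
        (sum_lat k g - Itot = / 2 * sum_bdry k g + sum_delta k delta g ->
         const_on (kTri2 k) g))
  (hb : (INR (length (bdry k)) + 2) * 4 / (2 * INR (length (bdry k)) * v0)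
          * sumR IT (seq 0 k) >= / 2 * sum_bdry k g + sum_delta k delta g /\
        ((INR (length (bdry k)) + 2) * 4 / (2 * INR (length (bdry k)) * v0)
          * sumR IT (seq 0 k) = / 2 * sum_bdry k g + sum_delta k delta g ->
         const_on (kTri2 k) g)) :
  / vtot * Itot >= / INR (length (lat k)) * sum_lat k g /\
  (/ vtot * Itot = / INR (length (lat k)) * sum_lat k g <-> const_on (kTri2 k) g).
Proof.
  destruct hg as [_ HW], ha as [ha ha_eq], hb as [hb _].
  assert (HK : 1 <= INR k) by (apply (le_INR 1); lia).
  pose proof (area_kTri2 k vtot hk Hvtot) as Hvol.
  assert (Hlat : 0 < INR (length (lat k))) by (rewrite lat_length; nra).
  pose proof (integral_kTri2_W2 k g Itot IT hk HW HItot HIT) as Hdec.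
  rewrite (bdry_length k hk), (area_T0 k v0 hk Hv0) in hb.
  replace ((4 * INR k + 2) * 4 / (2 * (4 * INR k) * INR k) * sumR IT (seq 0 k))
    with ((INR (length (lat k)) - vtot) / vtot * Itot) in hb
    by (rewrite Hdec, lat_length, Hvol; field; lra).
  destruct (mean_le_of_excess_bound vtot _ _ Itot _ ltac:(nra) Hlat ha (Rge_le _ _ hb))
    as [Hle Heq].
  split; [lra | split].
  - intros E. apply ha_eq, Heq. auto.
  - intros [c Hc].
    rewrite (riemann_int_scale _ _ _ _ _ _ c HItot Hvtot), (sum_lat_const k g c)
      by (intros; rewrite Hc; auto; ring).
    field. split; nra.
Qed.
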